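(* Let $q\in\mathbb{N}$ be odd and square-free. Then for any fixed $\varepsilon>0$, \[\widehat{B}_3(q)\ll_{\varepsilon}q^{\varepsilon}\,\widehat{B}_2(q),\] the implied constant depending only on $\varepsilon$.
   Context: For an integral quadratic form $Q$ in $n$ variables, $\widehat{m}(Q;q):=\min\{\|\mathbf{x}\|:\ \mathbf{x}\in\mathbb{Z}^n\setminus\{\mathbf{0}\},\ \exists t\in\mathbb{Z},\ Q(\mathbf{x})\equiv t^2\pmod q\}$, with $\|\cdot\|$ the Euclidean norm, and $\widehat{B}_n(q):=\max_Q\widehat{m}(Q;q)$, the maximum over all integral quadratic forms $Q$ in $n$ variables with $\gcd(\det(Q),q)=1$. Since $q$ is odd, $Q$ is represented modulo $q$ by a symmetric integer matrix $M$ with $Q(\mathbf{x})\equiv\mathbf{x}^TM\mathbf{x}\pmod q$, and $\det(Q)$ means $\det(M)$. *)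

From HB Require Import structures.
From mathcomp Require Import all_boot all_order all_algebra.
From mathcomp Require Import all_classical all_reals exp.
Set Implicit Arguments. Unset Strict Implicit. Unset Printing Implicit Defensive.
Import Order.TTheory GRing.Theory Num.Theory.
Local Open Scope classical_set_scope.
Local Open Scope ring_scope.

Definition squarefree (q : nat) : Prop :=
  forall p : nat, prime p -> ~~ (p ^ 2 %| q)%N.

Definition qform (n : nat) (M : 'M[int]_n) (x : 'cV[int]_n) : int :=
  (x^T *m M *m x) 0 0.

Definition eucl_norm (R : realType) (n : nat) (x : 'cV[int]_n) : R :=
  Num.sqrt (\sum_(i < n) ((x i 0) ^+ 2)%:~R).

Definition mhat (R : realType) (n : nat) (M : 'M[int]_n) (q : nat) : R :=
  inf [set eucl_norm R x | x in
        [set x : 'cV[int]_n | x != 0 /\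
           exists t : int, (qform M x == t ^+ 2 %[mod q%:Z])%Z]].

Definition Bhat (R : realType) (n : nat) (q : nat) : R :=
  sup [set mhat R M q | M in
        [set M : 'M[int]_n | M^T = M /\ coprimez (\det M) q%:Z]].

From HB Require Import structures.
From mathcomp Require Import all_boot all_order all_algebra.
From mathcomp Require Import all_classical all_reals exp.
From mathcomp Require Import zify ring lra.
Import Order.TTheory GRing.Theory Num.Theory.

(* Restrict Q to the plane x_3 = a x_1: the restricted binary form has determinant
   D(a) = c_0 + c_1 a + c_2 a^2.  For an odd prime p dividing q, the c_i cannot all
   vanish mod p, since then det M would too; so D has at most two roots mod p.  A
   Legendre-type sieve over the primes of q then yields a < 9^omega(q) with D(a)
   prime to q.  Lifting vectors y of the plane to (y_1, y_2, a y_1) preserves Q and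
   stretches lengths by at most 1 + a, whence B_3(q) <= 9^omega(q) B_2(q); finally
   9^omega(q) << q^eps because omega(q)! <= q. *)

Set Implicit Arguments.
Unset Strict Implicit.
Unset Printing Implicit Defensive.

(* The number of j < N with j = r (mod p), when r < p. *)
Definition nres (N p r : nat) : nat := (N + p - 1 - r) %/ p.

Lemma nres_bounds N p r : 0 < p -> r < p ->
  nres N p r * p <= N + p /\ N <= nres N p r * p + p.
Proof.
move=> p0 rp; rewrite /nres; split.
  apply: leq_trans (leq_divM _ _) _; lia.
have := ltn_ceil (N + p - 1 - r) p0; lia.
Qed.

Lemma nresS_eq N p r : 0 < p -> r < p -> r != N %% p ->
  nres N.+1 p r = nres N p r.
Proof.
move=> p0 rp rN; rewrite /nres.
have -> : N.+1 + p - 1 - r = (N + p - 1 - r).+1 by lia.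
rewrite divnS //; case: dvdnP => [[k Hk]|//].
have : (N + p) %% p = (k * p + r) %% p by congr (_ %% _); lia.
by rewrite modnDr modnMDl (modn_small rp) => NE; rewrite NE eqxx in rN.
Qed.

Lemma nresS_mod N p : 0 < p ->
  nres N.+1 p (N %% p) = (nres N p (N %% p)).+1 /\ nres N p (N %% p) = N %/ p.
Proof.
move=> p0; have := divn_eq N p; have := ltn_pmod N p0 => Np eqN.
rewrite /nres; have -> : N + p - 1 - N %% p = N %/ p * p + (p - 1) by lia.
rewrite [(_ + (p - 1)) %/ p]divnMDl // [(p - 1) %/ p]divn_small ?addn0; last lia.
have -> : N.+1 + p - 1 - N %% p = (N %/ p).+1 * p by lia.
by rewrite mulnK.
Qed.

Lemma sum_by_residue (F : nat -> nat) p N : 0 < p ->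
  \sum_(j < N) F j = \sum_(r < p) \sum_(i < nres N p r) F (r + p * i).
Proof.
move=> p0; elim: N => [|N IH].
  rewrite big_ord0 big1 // => r _.
  by rewrite /nres divn_small ?big_ord0 //; have := ltn_ord r; lia.
have Np : N %% p < p by rewrite ltn_pmod.
rewrite big_ord_recr /= IH [in RHS](bigD1 (Ordinal Np)) //= [in LHS](bigD1 (Ordinal Np)) //=.
have [-> nresN] := nresS_mod N p0.
rewrite big_ord_recr /= nresN addnAC -!addnA; congr (_ + (_ + _)).
  by rewrite addnC mulnC -divn_eq.
by apply: eq_bigr => r rN; rewrite nresS_eq //; apply: contra rN.
Qed.

Lemma sum_affine_residues (F : nat -> nat) p s m : 0 < p -> coprime m p ->
  (forall a, F a = F (a %% p)) ->
  \sum_(r < p) F (s + m * r) = \sum_(r < p) F r.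
Proof.
move=> p0 cop per.
pose h (r : 'I_p) : 'I_p := Ordinal (ltn_pmod (s + m * r) p0).
have hinj : injective h.
  move=> r1 r2 /(congr1 val) /= /eqP; rewrite eqn_modDl => E; apply: val_inj => /=.
  wlog le21 : r1 r2 E / r2 <= r1.
    by move=> W; case: (leqP r2 r1) => [|/ltnW] h21; [|apply/esym]; apply: W; rewrite // eq_sym.
  move: E; rewrite eqn_mod_dvd ?leq_mul2l ?le21 ?orbT // -mulnBr.
  rewrite Gauss_dvdr ?(coprime_sym p) // => /dvdn_leq.
  have := ltn_ord r1; case: (ltngtP r1 r2) => // r12 r1p; lia.
rewrite [RHS](reindex_inj hinj); apply: eq_bigr => r _ /=; exact: per.
Qed.

Lemma coprime_by_primes m n : 0 < n ->
  (forall p, p \in primes n -> ~~ (p %| m)) -> coprime m n.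
Proof.
move=> n0 hp; rewrite /coprime; set g := gcdn m n.
have g0 : 0 < g by rewrite gcdn_gt0 n0 orbT.
rewrite eqn_leq g0 andbT leqNgt; apply/negP => g1.
have pg := pdiv_dvd g.
have := hp (pdiv g); rewrite mem_primes pdiv_prime // n0 (dvdn_trans pg (dvdn_gcdr _ _)).
by rewrite (dvdn_trans pg (dvdn_gcdl _ _)) => /(_ isT).
Qed.

Lemma prod_path_ltn_ge b s :
  path ltn b s -> \prod_(i < size s) (b + i.+1) <= \prod_(x <- s) x.
Proof.
elim: s b => [|x s IH] b /=; first by rewrite big_ord0 big_nil.
move=> /andP [bx xs]; rewrite big_ord_recl big_cons /=.
apply: leq_mul; first by rewrite addn1.
by apply: leq_trans (IH x xs); apply: leq_prod => i _; rewrite /bump /=; lia.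
Qed.

Lemma fact_size_primes_le q : 0 < q -> (size (primes q))`! <= q.
Proof.
move=> q0; have primes_gt0 : path ltn 0 (primes q).
  have pos p : p \in primes q -> 0 < p by rewrite mem_primes => /and3P [/prime_gt0].
  by move: (sorted_primes q) pos; case: (primes q) => //= p s -> /(_ p (mem_head _ _)) ->.
have := prod_path_ltn_ge primes_gt0.
rewrite fact_prod big_add1 big_mkord => /leq_trans; apply.
rewrite {2}(prod_prime_decomp q0) prime_decompE big_map /= !big_seq.
apply: leq_prod => p; rewrite mem_primes => /and3P [pr _ pq].
rewrite -{1}(expn1 p) leq_pexp2l ?prime_gt1 //; first exact: prime_gt0.
by rewrite logn_gt0 mem_primes pr q0.
Qed.

Lemma expn_le_fact m k : m ^ k <= m ^ m * k`!.
Proof.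
elim: k => [|k IH]; first by rewrite expn0 fact0 muln1 expn_gt0; case: m.
case: (leqP m k) => mk.
  rewrite expnS factS mulnCA mulnC [X in _ <= X]mulnC; apply: leq_mul => //; lia.
by apply: leq_trans (leq_pmulr _ (fact_gt0 _)); rewrite leq_pexp2l //; lia.
Qed.

Section Sieve.
Variable bad : nat -> nat -> bool.

Definition avoids (ps : seq nat) (x : nat) : bool := all (fun p => ~~ bad p x) ps.

Definition count_avoiding (ps : seq nat) (s m N : nat) : nat :=
  \sum_(j < N) avoids ps (s + m * j).

Definition nbad (p : nat) : nat := \sum_(r < p) bad p r.

Definition admissible (ps : seq nat) : Prop :=
  forall p, p \in ps -> [/\ prime p, 2 < p, nbad p <= 2 &
                          forall a, bad p a = bad p (a %% p)].

Lemma admissible_cons p ps : admissible (p :: ps) -> admissible ps.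
Proof. by move=> ok q qin; apply: ok; rewrite in_cons qin orbT. Qed.

Lemma count_avoiding_cons p ps s m N : 0 < p ->
  (forall a, bad p a = bad p (a %% p)) ->
  count_avoiding (p :: ps) s m N +
  \sum_(r < p) bad p (s + m * r) * count_avoiding ps (s + m * r) (m * p) (nres N p r)
  = count_avoiding ps s m N.
Proof.
move=> p0 per; rewrite /count_avoiding.
have -> : \sum_(j < N) avoids ps (s + m * j) =
    \sum_(j < N) (~~ bad p (s + m * j) && avoids ps (s + m * j)) +
    \sum_(j < N) (bad p (s + m * j) && avoids ps (s + m * j)).
  by rewrite -big_split; apply: eq_bigr => j _; case: (bad p _); case: (avoids ps _).
congr (_ + _); rewrite (sum_by_residue (fun j => bad p (s + m * j) && avoids ps (s + m * j)) N p0).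
apply: eq_bigr => r _.
have shift i : s + m * (r + p * i) = s + m * r + m * p * i by ring.
have bad_shift i : bad p (s + m * r + m * p * i) = bad p (s + m * r).
  by rewrite per [RHS]per -modnDm -mulnA mulnCA modnMr addn0 modn_mod.
under [RHS]eq_bigr => i _ do rewrite shift bad_shift.
by case: (bad p (s + m * r)); rewrite ?mul1n // mul0n big1.
Qed.

Local Open Scope ring_scope.

Definition density (ps : seq nat) : rat := \prod_(p <- ps) (1 - (nbad p)%:R / p%:R).

Lemma density_bounds ps : admissible ps ->
  0 <= density ps <= 1 /\ 1 <= density ps * (3 ^ size ps)%:R.
Proof.
elim: ps => [|p ps IH] ok; first by rewrite /density big_nil /= mul1r lexx; split=> //; lra.
have [pr p2 r2 _] := ok p (mem_head _ _).
have [/andP [d0 d1] d3] := IH (admissible_cons ok).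
rewrite /density big_cons -/(density ps).
set D := density ps in d0 d1 d3 *.
have pp : (0 : rat) < p%:R by rewrite ltr0n; lia.
have rp : (nbad p)%:R / p%:R <= 2%:R / 3%:R :> rat.
  by rewrite ler_pdivrMr // mulrAC ler_pdivlMr ?ltr0n // -!natrM ler_nat; lia.
have f1 : 1 - (nbad p)%:R / p%:R <= 1 :> rat.
  by rewrite lerBlDr lerDl divr_ge0 ?ler0n.
have f3 : 1 / 3 <= 1 - (nbad p)%:R / p%:R :> rat by lra.
have D3 : 0 <= (3 ^ size ps)%:R :> rat by apply: ler0n.
split; first by rewrite mulr_ge0 ?mulr_ile1 //=; lra.
rewrite /= expnS natrM; nra.
Qed.

Lemma nres_approx N p r : (0 < p)%N -> (r < p)%N ->
  `|(nres N p r)%:R - N%:R / p%:R| <= 1 :> rat.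
Proof.
move=> p0 rp; have [c1 c2] := nres_bounds N p0 rp.
have pp : (0 : rat) < p%:R by rewrite ltr0n.
have tN : N%:R / p%:R * p%:R = N%:R :> rat by rewrite divfK ?gt_eqF.
move: c1 c2; rewrite -(ler_nat rat) -[(N <= _)%N](ler_nat rat) !natrD natrM.
move: (N%:R / p%:R) tN (nres N p r)%:R => t <- c c1 c2.
by rewrite ler_norml; apply/andP; split; nra.
Qed.

Definition sieve_bound (ps : seq nat) (E : rat) : Prop :=
  forall s m N, (forall p, p \in ps -> coprime m p) ->
  `|(count_avoiding ps s m N)%:R - N%:R * density ps| <= E.

Lemma sieve_bound_class ps E p s m N (r : 'I_p) : sieve_bound ps E ->
  0 <= density ps <= 1 -> (forall q, q \in ps -> coprime (m * p) q) ->
  `|(count_avoiding ps (s + m * r) (m * p) (nres N p r))%:R - N%:R * density ps / p%:R|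
  <= E + 1.
Proof.
move=> sb /andP [D0 D1] cop.
have p0 : (0 < p)%N := leq_ltn_trans (leq0n r) (ltn_ord r).
set G : rat := (count_avoiding _ _ _ _)%:R; set D := density ps.
set c : rat := (nres N p r)%:R.
have -> : G - N%:R * D / p%:R = (G - c * D) + (c - N%:R / p%:R) * D.
  by ring.
apply: le_trans (ler_normD _ _) _; rewrite normrM (ger0_norm D0) lerD //.
  exact: sb.
by rewrite -[1]mulr1 ler_pM ?nres_approx.
Qed.

Lemma sieve_error_cons p ps s m N : (0 < p)%N -> coprime m p ->
  (forall a, bad p a = bad p (a %% p)) ->
  (count_avoiding (p :: ps) s m N)%:R - N%:R * density (p :: ps) =
    ((count_avoiding ps s m N)%:R - N%:R * density ps) -
    \sum_(r < p) (bad p (s + m * r))%:R *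
      ((count_avoiding ps (s + m * r) (m * p) (nres N p r))%:R - N%:R * density ps / p%:R).
Proof.
move=> p0 copmp per; have pp : (0 : rat) < p%:R by rewrite ltr0n.
have nbadE : (nbad p)%:R = \sum_(r < p) (bad p (s + m * r))%:R :> rat.
  by rewrite -natr_sum (sum_affine_residues s p0 copmp (fun a => congr1 nat_of_bool (per a))).
rewrite -(count_avoiding_cons ps s m N p0 per) natrD [(\sum_(r < p) _)%:R]natr_sum.
rewrite /density big_cons -/(density ps).
under eq_bigr => r _ do rewrite natrM.
rewrite [X in _ = _ - X](eq_bigr _ (fun r _ => mulrBr _ _ _)) sumrB -mulr_suml -nbadE.
by field; rewrite gt_eqF.
Qed.

(* Each prime p splits the progression into p subprogressions of modulus m p,
   at most two of which are removed; each of those inherits the error of the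
   remaining primes plus 1 for rounding N / p. *)
Lemma sieve_bound_cons p ps E : p \notin ps -> admissible (p :: ps) ->
  sieve_bound ps E -> sieve_bound (p :: ps) (3 * E + 2).
Proof.
move=> pnin ok sb s m N cop.
have [pr p2 r2 per] := ok p (mem_head _ _).
have okps := admissible_cons ok.
have p0 : (0 < p)%N by lia.
have [Dbounds _] := density_bounds okps.
have E0 : 0 <= E := le_trans (normr_ge0 _) (sb 0 1 0 (fun q _ => coprime1n q))%N.
have cop_ps q : q \in ps -> coprime m q.
  by move=> qin; apply: cop; rewrite in_cons qin orbT.
have copr q : q \in ps -> coprime (m * p) q.
  move=> qin; have [prq _ _ _] := okps q qin.
  rewrite coprimeMl cop_ps // prime_coprime // dvdn_prime2 //.
  by apply: contraNneq pnin => ->.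
have copmp : coprime m p by apply: cop; rewrite mem_head.
rewrite sieve_error_cons //; apply: le_trans (ler_normB _ _) _.
have class (r : 'I_p) :
    `|(bad p (s + m * r))%:R * ((count_avoiding ps (s + m * r) (m * p) (nres N p r))%:R
                                  - N%:R * density ps / p%:R)|
    <= (bad p (s + m * r))%:R * (E + 1) :> rat.
  by case: (bad p _); rewrite ?mul0r ?normr0 // !mul1r; exact: sieve_bound_class.
apply: le_trans (lerD (sb s m N cop_ps)
  (le_trans (ler_norm_sum _ _ _) (ler_sum _ (fun r _ => class r)))) _.
rewrite -mulr_suml -natr_sum (sum_affine_residues s p0 copmp (fun a => congr1 nat_of_bool (per a))).
have : (nbad p)%:R <= 2 :> rat by rewrite (ler_nat _ _ 2).
nra.
Qed.

Lemma sieve_error ps : uniq ps -> admissible ps ->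
  sieve_bound ps ((3 ^ size ps)%:R - 1).
Proof.
elim: ps => [|p ps IH] /=.
  move=> _ _ s m N _.
  rewrite /count_avoiding /density big_nil /= sum_nat_const card_ord muln1 mulr1.
  by rewrite !subrr normr0.
move=> /andP [pnin uq] ok.
rewrite expnS natrM.
have -> : 3%:R * (3 ^ size ps)%:R - 1 = 3 * ((3 ^ size ps)%:R - 1) + 2 :> rat by ring.
exact: sieve_bound_cons pnin ok (IH uq (admissible_cons ok)).
Qed.

Lemma exists_avoiding ps : uniq ps -> admissible ps ->
  exists2 j, (j < 9 ^ size ps)%N & avoids ps j.
Proof.
move=> uq ok.
have := sieve_error uq ok 0 (9 ^ size ps)%N (fun p _ => coprime1n p).
have [_ D3] := density_bounds ok.
have -> : (9 ^ size ps)%:R = (3 ^ size ps)%:R * (3 ^ size ps)%:R :> rat.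
  by rewrite -natrM -expnMn.
rewrite ler_norml => /andP [lb _].
have c0 : 0 <= (3 ^ size ps)%:R :> rat by apply: ler0n.
have : (0 < count_avoiding ps 0 1 (9 ^ size ps))%N by rewrite -(ltr_nat rat); nra.
case: (pickP (fun j : 'I_(9 ^ size ps) => avoids ps j)) => [j Hj _ | none].
  by exists j.
by rewrite /count_avoiding big1 // => j _; rewrite add0n mul1n none.
Qed.

End Sieve.

Local Open Scope ring_scope.

Definition root_mod (f : {poly int}) (p a : nat) : bool := (p%:Z %| f.[a%:Z])%Z.

Lemma root_modE f p a : prime p ->
  root_mod f p a = root (map_poly intr f : {poly 'F_p}) a%:R.
Proof.
by move=> pr; rewrite /root_mod (dvdz_pcharf (pchar_Fp pr)) /root -[a%:R]/((a%:Z)%:~R) horner_map.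
Qed.

Lemma root_mod_mod f p a : prime p -> root_mod f p a = root_mod f p (a %% p).
Proof. by move=> pr; rewrite !root_modE // Fp_nat_mod. Qed.

Lemma nroots_mod_le f p : prime p -> map_poly intr f != 0 :> {poly 'F_p} ->
  (\sum_(r < p) root_mod f p r <= (size f).-1)%N.
Proof.
move=> pr fp0; set A := [pred r : 'I_p | root_mod f p r].
have -> : (\sum_(r < p) root_mod f p r = #|A|)%N.
  by rewrite -sum1_card [RHS]big_mkcond; apply: eq_bigr => r _; rewrite inE; case: root_mod.
pose rs := [seq (val r)%:R : 'F_p | r <- enum A].
have sz : (size rs < size (map_poly intr f : {poly 'F_p}))%N.
  apply: max_poly_roots fp0 _ _.
    by apply/allP => _ /mapP [r rA ->]; rewrite -root_modE //; move: rA; rewrite mem_enum.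
  rewrite map_inj_uniq ?enum_uniq // => r1 r2 /(congr1 val) /=.
  by rewrite !val_Fp_nat // !modn_small // => /val_inj.
have szf : (size (map_poly intr f : {poly 'F_p}) <= size f)%N by exact: size_poly.
rewrite cardE -(size_map (fun r : 'I_p => (val r)%:R : 'F_p)) -/rs.
by have := leq_trans sz szf; lia.
Qed.

Definition ent3 (M : 'M[int]_3) (i j : nat) : int := M (inord i) (inord j).

Lemma ent3E (M : 'M[int]_3) (i j : 'I_3) : M i j = ent3 M i j.
Proof. by rewrite /ent3 !inord_val. Qed.

Lemma ent3_sym (M : 'M[int]_3) : M^T = M -> forall i j, ent3 M i j = ent3 M j i.
Proof. by move=> MT i j; rewrite /ent3 -{1}MT mxE. Qed.

Lemma det3E (M : 'M[int]_3) : \det M =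
  ent3 M 0 0 * (ent3 M 1 1 * ent3 M 2 2 - ent3 M 1 2 * ent3 M 2 1)
  - ent3 M 0 1 * (ent3 M 1 0 * ent3 M 2 2 - ent3 M 1 2 * ent3 M 2 0)
  + ent3 M 0 2 * (ent3 M 1 0 * ent3 M 2 1 - ent3 M 1 1 * ent3 M 2 0).
Proof.
rewrite (expand_det_row _ ord0) !big_ord_recr !big_ord0 /= /cofactor.
rewrite !(expand_det_row _ ord0) !big_ord_recr !big_ord0 /= /cofactor.
by rewrite !det_mx11 !mxE /= !ent3E /bump /=; ring.
Qed.

(* The Gram matrix of Q on the plane x_3 = a x_1, in the basis (e_1 + a e_3, e_2). *)
Definition plane_form (M : 'M[int]_3) (a : int) : 'M[int]_2 :=
  \matrix_(i < 2, j < 2)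
    if (i == 0 :> nat) && (j == 0 :> nat) then
      ent3 M 0 0 + 2 * a * ent3 M 0 2 + a ^+ 2 * ent3 M 2 2
    else if (i == 1 :> nat) && (j == 1 :> nat) then ent3 M 1 1
    else ent3 M 0 1 + a * ent3 M 1 2.

Lemma plane_form_sym M a : (plane_form M a)^T = plane_form M a.
Proof. by apply/matrixP => i j; rewrite !mxE andbC [(_ == 1%N) && _]andbC. Qed.

Definition plane_det_poly (M : 'M[int]_3) : {poly int} :=
  Poly [:: ent3 M 0 0 * ent3 M 1 1 - ent3 M 0 1 ^+ 2;
           2 * (ent3 M 1 1 * ent3 M 0 2 - ent3 M 0 1 * ent3 M 1 2);
           ent3 M 1 1 * ent3 M 2 2 - ent3 M 1 2 ^+ 2].

Lemma det_plane_form M a : \det (plane_form M a) = (plane_det_poly M).[a].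
Proof.
rewrite (expand_det_row _ ord0) !big_ord_recr !big_ord0 /= /cofactor.
by rewrite !det_mx11 !mxE /= horner_Poly /=; ring.
Qed.

(* Multiplying by b, the determinant becomes
   (a b - d^2) (b c - f^2) - (b e - d f)^2. *)
Lemma det3_sym_eq0 (R : idomainType) (a b c d e f : R) :
  a * b = d ^+ 2 -> b * e = d * f -> b * c = f ^+ 2 ->
  a * (b * c - f ^+ 2) - d * (d * c - f * e) + e * (d * f - b * e) = 0.
Proof.
move=> h0 h1 h2; have [b0|bn0] := eqVneq b 0.
  have d0 : d = 0 by apply/eqP; rewrite -sqrf_eq0 -h0 b0 mulr0.
  have f0 : f = 0 by apply/eqP; rewrite -sqrf_eq0 -h2 b0 mul0r.
  by rewrite b0 d0 f0; ring.
apply: (mulfI bn0); rewrite mulr0.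
transitivity ((a * b - d ^+ 2) * (b * c - f ^+ 2) - (b * e - d * f) ^+ 2); first by ring.
by rewrite h0 h1 h2 !subrr; ring.
Qed.

Lemma plane_det_poly_neq0 M p : M^T = M -> prime p -> p != 2%N ->
  ~~ (p%:Z %| \det M)%Z -> map_poly intr (plane_det_poly M) != 0 :> {poly 'F_p}.
Proof.
move=> MT pr p2; rewrite (dvdz_pcharf (pchar_Fp pr)); apply: contraNneq => P0.
have coef_eq0 i : ((plane_det_poly M)`_i)%:~R = 0 :> 'F_p by rewrite -coef_map P0 coef0.
have two : (2 : 'F_p) != 0 by rewrite -(dvdn_pcharf (pchar_Fp pr) 2) dvdn_prime2.
move: (coef_eq0 0%N) (coef_eq0 1%N) (coef_eq0 2%N); rewrite !coef_Poly /=.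
rewrite det3E !(ent3_sym MT 1 0, ent3_sym MT 2 0, ent3_sym MT 2 1).
rewrite !(rmorphB, rmorphM, rmorphD, rmorphXn) /=.
move: (ent3 M 0 0)%:~R (ent3 M 1 1)%:~R (ent3 M 2 2)%:~R => a b c.
move: (ent3 M 0 1)%:~R (ent3 M 0 2)%:~R (ent3 M 1 2)%:~R => d e f.
move=> /eqP; rewrite subr_eq0 => /eqP h0 /eqP; rewrite mulf_eq0 (negbTE two) subr_eq0 /=.
move=> /eqP h1 /eqP; rewrite subr_eq0 => /eqP h2.
by apply/eqP/det3_sym_eq0.
Qed.

Lemma plane_choice M q : M^T = M -> coprimez (\det M) q%:Z -> odd q ->
  exists2 a : nat, (a < 9 ^ size (primes q))%N & coprimez (\det (plane_form M a%:Z)) q%:Z.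
Proof.
move=> MT cop oq; have q0 : (0 < q)%N by case: (q) oq.
have ok : admissible (root_mod (plane_det_poly M)) (primes q).
  move=> p; rewrite mem_primes => /and3P [pr _ pq].
  have p2 : p != 2%N by apply: contraTneq oq => p2; rewrite -dvdn2 -p2.
  have pdet : ~~ (p%:Z %| \det M)%Z.
    apply: contraL pq; rewrite dvdzE /= => pd.
    by rewrite -prime_coprime // (coprime_dvdl pd cop).
  split => //; first by have := prime_gt1 pr; lia.
    apply: leq_trans (nroots_mod_le pr (plane_det_poly_neq0 MT pr p2 pdet)) _.
    by rewrite -subn1 leq_subLR; exact: size_Poly.
  by move=> a; apply: root_mod_mod.
have [j jlt avj] := exists_avoiding (primes_uniq q) ok.
exists j => //; rewrite det_plane_form coprimezE /=.
apply: coprime_by_primes q0 _ => p pq.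
by move/allP: avj => /(_ p pq); rewrite /root_mod dvdzE.
Qed.

Definition coord n (x : 'cV[int]_n.+1) (i : nat) : int := x (inord i) 0.

Lemma coordE n (x : 'cV[int]_n.+1) (i : 'I_n.+1) : x i 0 = coord x i.
Proof. by rewrite /coord inord_val. Qed.

Definition ent2 (M : 'M[int]_2) (i j : nat) : int := M (inord i) (inord j).

Lemma ent2E (M : 'M[int]_2) (i j : 'I_2) : M i j = ent2 M i j.
Proof. by rewrite /ent2 !inord_val. Qed.

Definition plane_vec (a : int) (y : 'cV[int]_2) : 'cV[int]_3 :=
  \col_(i < 3) if i == 0 :> nat then coord y 0
               else if i == 1 :> nat then coord y 1 else a * coord y 0.

Lemma qform_plane_vec M a y : M^T = M -> qform M (plane_vec a y) = qform (plane_form M a) y.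
Proof.
move=> MT; rewrite /qform !mxE !big_ord_recr !big_ord0 /= !mxE !big_ord_recr !big_ord0 /=.
rewrite !mxE /= !ent3E !coordE /= (ent3_sym MT 1 0) (ent3_sym MT 2 0) (ent3_sym MT 2 1).
by ring.
Qed.

Lemma plane_vec_neq0 a y : y != 0 -> plane_vec a y != 0.
Proof.
apply: contra => /eqP y0.
have yk k : (k < 2)%N -> coord y k = 0.
  move=> k2; have := congr1 (fun x : 'cV_3 => x (inord k) 0) y0.
  by rewrite !mxE inordK //; case: k k2 => [|[]].
apply/eqP/matrixP => i j; rewrite (ord1 j) coordE mxE yk //.
Qed.

Lemma norm_plane_vec (R : realType) (a : nat) y :
  eucl_norm R (plane_vec a%:Z y) <= (1 + a%:R) * eucl_norm R y.
Proof.
rewrite /eucl_norm !big_ord_recr !big_ord0 /= !mxE /= !coordE /=.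
have a0 : (0 : R) <= 1 + a%:R by rewrite addr_ge0 ?ler0n.
rewrite -[1 + a%:R](ger0_norm a0) -sqrtr_sqr -sqrtrM ?sqr_ge0 //.
rewrite ler_sqrt; last by rewrite mulr_ge0 ?sqr_ge0 // !addr_ge0 // ?lexx // ler0z sqr_ge0.
rewrite !rmorphXn /= !rmorphM /=.
move: (coord y 0)%:~R (coord y 1)%:~R (ler0n R a) => u v; rewrite [a%:Z%:~R]/=.
nra.
Qed.

Section MinimalVectors.
Variable R : realType.
Local Open Scope classical_set_scope.

Definition sq_mod_vectors n (M : 'M[int]_n) (q : nat) : set 'cV[int]_n :=
  [set x | x != 0 /\ exists t : int, (qform M x == t ^+ 2 %[mod q%:Z])%Z].

Lemma mhat_le n (M : 'M[int]_n) q x : sq_mod_vectors M q x -> mhat R M q <= eucl_norm R x.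
Proof.
move=> Sx; apply: ge_inf; last by exists x.
by exists 0 => _ [y _ <-]; apply: sqrtr_ge0.
Qed.

(* q e_1 always qualifies, which bounds mhat for binary forms by q. *)
Definition qe1 (q : nat) : 'cV[int]_2 := \col_(i < 2) if i == 0 :> nat then q%:Z else 0.

Lemma qe1_sq_mod (M : 'M[int]_2) q : (0 < q)%N -> sq_mod_vectors M q (qe1 q).
Proof.
move=> q0; split.
  by apply/eqP => /matrixP /(_ ord0 ord0); rewrite !mxE /= => -[q00]; rewrite q00 in q0.
exists 0; rewrite expr0n /= mod0z.
have -> : qform M (qe1 q) = ent2 M 0 0 * q%:Z * q%:Z.
  rewrite /qform !mxE !big_ord_recr !big_ord0 /= !mxE !big_ord_recr !big_ord0 /=.
  by rewrite !mxE /= !ent2E /=; ring.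
by rewrite modzMl.
Qed.

Lemma norm_qe1 q : eucl_norm R (qe1 q) = q%:R.
Proof.
rewrite /eucl_norm !big_ord_recr !big_ord0 /= !mxE /=.
by rewrite expr0n /= add0r addr0 rmorphXn /= sqrtr_sqr ger0_norm.
Qed.

Lemma has_inf_mhat2 (M : 'M[int]_2) q : (0 < q)%N ->
  has_inf [set eucl_norm R x | x in sq_mod_vectors M q].
Proof.
move=> q0; split; first by exists (eucl_norm R (qe1 q)), (qe1 q) => //; exact: qe1_sq_mod.
by exists 0 => _ [y _ <-]; apply: sqrtr_ge0.
Qed.

Lemma mhat2_le (M : 'M[int]_2) q : (0 < q)%N -> mhat R M q <= q%:R.
Proof. by move=> q0; rewrite -(norm_qe1 q); apply/mhat_le/qe1_sq_mod. Qed.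

Lemma mhat2_ge0 (M : 'M[int]_2) q : (0 < q)%N -> 0 <= mhat R M q.
Proof.
move=> q0; apply: lb_le_inf; first by case: (has_inf_mhat2 M q0).
by move=> _ [y _ <-]; apply: sqrtr_ge0.
Qed.

Lemma mhat2_le_Bhat (M : 'M[int]_2) q : (0 < q)%N -> M^T = M -> coprimez (\det M) q%:Z ->
  mhat R M q <= Bhat R 2 q.
Proof.
move=> q0 MT cop; apply: ub_le_sup; last by exists M.
by exists q%:R => _ [N _ <-]; apply: mhat2_le.
Qed.

Lemma Bhat2_ge0 q : (0 < q)%N -> 0 <= Bhat R 2 q.
Proof.
move=> q0; apply: le_trans (mhat2_ge0 1%:M q0) (mhat2_le_Bhat q0 _ _).
  by rewrite trmx1.
by rewrite det1 coprimezE /= coprime1n.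
Qed.

Lemma mhat_le_plane M q (a : nat) : (0 < q)%N -> M^T = M ->
  mhat R M q <= (1 + a%:R) * mhat R (plane_form M a%:Z) q.
Proof.
move=> q0 MT; have a0 : (0 : R) < 1 + a%:R by rewrite ltr_pwDl ?ler0n.
apply/ler_addgt0Pr => e e0.
have [_ [y [yn0 [t yt]] <-] ylt] :=
  inf_adherent (divr_gt0 e0 a0) (has_inf_mhat2 (plane_form M a%:Z) q0).
have Sy : sq_mod_vectors M q (plane_vec a%:Z y).
  by split; [exact: plane_vec_neq0 | exists t; rewrite qform_plane_vec].
apply: le_trans (mhat_le Sy) _; apply: le_trans (norm_plane_vec R a y) _.
have -> : e = (1 + a%:R) * (e / (1 + a%:R)) by rewrite mulrC divfK ?lt0r_neq0.
by rewrite -mulrDr ler_pM2l //; exact: ltW.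
Qed.

Lemma Bhat3_le q : odd q -> Bhat R 3 q <= (9 ^ size (primes q))%:R * Bhat R 2 q.
Proof.
move=> oq; have q0 : (0 < q)%N by case: (q) oq.
apply: ge_sup.
  exists (mhat R (1%:M : 'M[int]_3) q), 1%:M => //; split; first by rewrite trmx1.
  by rewrite det1 coprimezE /= coprime1n.
move=> _ [M [MT cop] <-].
have [a alt acop] := plane_choice MT cop oq.
apply: le_trans (mhat_le_plane a q0 MT) _.
apply: ler_pM; [by rewrite addr_ge0 ?ler0n | exact: mhat2_ge0 | |].
  by rewrite addrC natr1 ler_nat.
exact: mhat2_le_Bhat (plane_form_sym M a) acop.
Qed.

End MinimalVectors.

Lemma expn_omega_le (R : realType) (b : nat) (eps : R) : 0 < eps ->
  exists2 C : R, 0 < C &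
    forall q, (0 < q)%N -> (b ^ size (primes q))%:R <= C * q%:R `^ eps.
Proof.
(* With b <= m^eps: b^k <= (m^k)^eps <= (m^m k!)^eps <= (m^m q)^eps. *)
move=> eps0; set m := (Num.truncn (b%:R `^ eps^-1 : R)).+1.
have bm : b%:R <= m%:R `^ eps.
  have -> : b%:R = (b%:R `^ eps^-1) `^ eps :> R.
    by rewrite -powRrM mulVf ?lt0r_neq0 // powRr1 ?ler0n.
  apply: (ge0_ler_powR (ltW eps0)); rewrite ?nnegrE ?powR_ge0 ?ler0n //.
  exact/ltW/truncnS_gt.
exists ((m ^ m)%:R `^ eps); first by rewrite powR_gt0 // ltr0n expn_gt0.
move=> q q0; set k := size (primes q).
apply: (@le_trans _ _ ((m%:R `^ eps) ^+ k)).
  by rewrite natrX lerXn2r // nnegrE ?ler0n ?powR_ge0.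
rewrite -powR_mulrn ?powR_ge0 // -powRrM mulrC powRrM powR_mulrn ?ler0n // -natrX.
rewrite -powRM ?ler0n // -natrM; apply: (ge0_ler_powR (ltW eps0)); rewrite ?nnegrE ?ler0n //.
by rewrite ler_nat (leq_trans (expn_le_fact m k)) // leq_mul2l fact_size_primes_le ?orbT.
Qed.

Theorem lemma4 (R : realType) (eps : R) (heps : 0 < eps) :
  exists C : R, 0 < C /\
    forall q : nat, odd q -> squarefree q ->
      Bhat R 3 q <= C * (q%:R `^ eps) * Bhat R 2 q.
Proof.
have [C C0 hC] := expn_omega_le 9 heps.
exists C; split => // q oq _; have q0 : (0 < q)%N by case: (q) oq.
apply: le_trans (Bhat3_le R oq) _.
by apply: ler_wpM2r; [exact: Bhat2_ge0 | exact: hC].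
Qed.
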